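(* Consider the private information delivery (PID) problem with $K$ messages, $N$ servers and $M$ messages stored per server, where $1\le M\le K$, $K/M\notin\mathbb{Z}$, and $$\lceil K/M \rceil < N < \frac{K}{\gcd(K,M)} - \left(\frac{M}{\gcd(K,M)}-1\right)\left(\lfloor K/M \rfloor - 1\right).$$ Then the capacity satisfies $$C \geq \frac{l}{N + (l-1)(\lfloor K/M \rfloor - 1)},\qquad\text{where } l = \left\lfloor \frac{(N - \lfloor K/M \rfloor + 1)M}{K - (\lfloor K/M \rfloor - 1) M} \right\rfloor.$$
   Context: The PID problem with parameters $(K,N,M)$: There are $K$ independent messages $W_1,\dots,W_K$, each consisting of $L$ i.i.d. uniform symbols from a finite field $\mathbb{F}_p$, so that (in $p$-ary units) $H(W_k)=L$ for all $k$ and $H(W_1,\dots,W_K)=\sum_k H(W_k)$. There are $N$ servers; server $n$ stores $S_n=\{W_k : k\in\mathcal{S}_n\}$ for some $\mathcal{S}_n\subset\{1,\dots,K\}$ with $|\mathcal{S}_n|=M$ (a design choice). The servers share a common random variable $Z$ independent of the messages. For each $k\in\{1,\dots,K\}$, server $n$ sends an answer $A_n^{[k]}$ that is a deterministic function of $(S_n,Z)$ and consists of $D_n$ symbols of $\mathbb{F}_p$ ($D_n$ independent of $k$). Correctness: $H(W_k\mid A_1^{[k]},\dots,A_N^{[k]})=0$ for all $k$. Privacy: for all $k$, $(A_1^{[1]},\dots,A_N^{[1]},W_1)$ and $(A_1^{[k]},\dots,A_N^{[k]},W_k)$ are identically distributed. The rate is $R=L/\sum_n D_n$; a rate is achievable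 if some scheme (choice of $L$, $p$, storage sets, $Z$, answer functions) satisfying these constraints has rate at least $R$; the capacity $C$ is the supremum of achievable rates over all storage designs and schemes. *)

From HB Require Import structures.
From mathcomp Require Import all_boot all_order all_algebra.
From mathcomp Require Import reals ereal classical_sets.
Set Implicit Arguments. Unset Strict Implicit. Unset Printing Implicit Defensive.
Import Order.TTheory GRing.Theory Num.Theory.
Local Open Scope ring_scope.

Definition msgs (K L p : nat) := {ffun 'I_K -> 'rV['F_p]_L}.

Definition prob (R : realType) (K L p : nat) (Zt : finType) (pZ : Zt -> R)
  (E : msgs K L p -> Zt -> bool) : R :=
  \sum_(w : msgs K L p) \sum_(z : Zt)
     (#|{: msgs K L p}|%:R)^-1 * pZ z * (E w z)%:R.

(* A PID scheme for parameters (K,N,M) with message length L over F_p,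
   storage sets S, common randomness Z on Zt with pmf pZ, answer lengths D,
   and answers A k n w z : 'rV_(D n) (answer of server n when W_k is desired). *)
Definition PID_scheme (R : realType) (K N M L p : nat) (Zt : finType)
  (pZ : Zt -> R) (S : 'I_N -> {set 'I_K}) (D : 'I_N -> nat)
  (A : forall (k : 'I_K) (n : 'I_N), msgs K L p -> Zt -> 'rV['F_p]_(D n)) : Prop :=
  prime p /\
      (forall n, #|S n| = M) /\
      ((forall z, 0 <= pZ z) /\ \sum_(z : Zt) pZ z = 1) /\
      (forall k n (w w' : msgs K L p) z,
          (forall i, i \in S n -> w i = w' i) -> A k n w z = A k n w' z) /\
      (* correctness: H(W_k | A_1^[k],...,A_N^[k]) = 0, i.e. on the support,
         the answers determine W_k *)
      (forall k (w w' : msgs K L p) z z', 0 < pZ z -> 0 < pZ z' ->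
          (forall n, A k n w z = A k n w' z') -> w k = w' k) /\
      (forall (k k' : 'I_K) (a : forall n : 'I_N, 'rV['F_p]_(D n))
              (x : 'rV['F_p]_L),
          prob pZ (fun w z => [forall n, A k n w z == a n] && (w k == x))
        = prob pZ (fun w z => [forall n, A k' n w z == a n] && (w k' == x))).

Definition achievable (R : realType) (K N M : nat) (r : R) : Prop :=
  exists (L p : nat) (Zt : finType) (pZ : Zt -> R) (S : 'I_N -> {set 'I_K})
         (D : 'I_N -> nat)
         (A : forall (k : 'I_K) (n : 'I_N), msgs K L p -> Zt -> 'rV['F_p]_(D n)),
    @PID_scheme R K N M L p Zt pZ S D A /\ r <= L%:R / (\sum_(n < N) D n)%:R.

Definition capacity (R : realType) (K N M : nat) : \bar R :=
  ereal_sup [set (r%:E) | r in [set r : R | achievable K N M r]].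

From HB Require Import structures.
From mathcomp Require Import all_boot all_order all_algebra.
From mathcomp Require Import reals ereal classical_sets.
From mathcomp Require Import perm ring zify.
Set Implicit Arguments. Unset Strict Implicit. Unset Printing Implicit Defensive.
Import Order.TTheory GRing.Theory Num.Theory.
Local Open Scope ring_scope.

(* Split each message into l symbols. Server n owns slots (n, 0), ..., (n, l) and
   sends the values of its first D n slots; slot i carries a vector phi_i of F^l, and
   a vector a of slot values decodes to sum_i a_i phi_i. If for every k some l slots,
   owned by servers that store W_k, carry a basis of F^l, then W_k has an encoding
   supported on them. To deliver W_k the servers send
   encode_k W_k + z - encode_k0 (decode z) for a uniform slot vector z: this decodes
   to W_k, each server can compute its own slots, and demanding W_k' instead amounts
   to swapping W_k with W_k' and translating z by encode_k W_k - encode_k' W_k, which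
   preserves all distributions; this is privacy.
   With Q = floor(K/M) - 1, the first Q servers store disjoint blocks of M messages
   and carry the unit vectors in l slots each; the other N - Q servers store the
   remaining K - QM messages cyclically, M at a time, and carry one Vandermonde vector
   each. Each remaining message is then stored by l cyclic servers with distinct
   evaluation points as long as l (K - QM) <= (N - Q) M, and the total download is
   Q l + N - Q symbols. *)

Lemma sum_ord_ltn_if (N Q a b : nat) : (Q <= N)%N ->
  (\sum_(n < N) (if (n < Q)%N then a else b) = Q * a + (N - Q) * b)%N.
Proof.
move=> QN; rewrite -(big_mkord xpredT (fun n => if (n < Q)%N then a else b)).
rewrite (big_cat_nat (leq0n Q) QN) /=.
rewrite (@eq_big_nat _ _ _ 0 Q _ (fun=> a)) => [|i /andP[_ ->]] //.
rewrite (@eq_big_nat _ _ _ Q N _ (fun=> b)) => [|i /andP[]].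
  by rewrite !sum_nat_const_nat subn0.
by rewrite leqNgt => /negbTE ->.
Qed.

Lemma natr_Fp_inj p i j : prime p -> (i < p)%N -> (j < p)%N ->
  (i%:R : 'F_p) = j%:R -> i = j.
Proof.
move=> p_prime i_lt_p j_lt_p /(congr1 (@nat_of_ord _)).
by rewrite !val_Fp_nat // !modn_small.
Qed.

Lemma floor_natr_div (R : realType) (a b : nat) : (0 < b)%N ->
  Num.floor (a%:R / b%:R : R) = (a %/ b)%:Z.
Proof.
move=> b_gt0; have b_gt0' : (0 : R) < b%:R by rewrite ltr0n.
apply: floor_def; apply/andP; split.
  by rewrite ler_pdivlMr // -natrM ler_nat leq_divM.
have -> : ((a %/ b)%:Z + 1)%:~R = (a %/ b).+1%:R :> R by rewrite intrD -addn1 natrD.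
rewrite ltr_pdivrMr // -natrM ltr_nat.
exact: ltn_ceil.
Qed.

Definition msgs_over (F : finFieldType) (K L : nat) := {ffun 'I_K -> 'rV[F]_L}.

Definition prob_over (R : realType) (F : finFieldType) (K L : nat) (Zt : finType)
    (pZ : Zt -> R) (E : msgs_over F K L -> Zt -> bool) : R :=
  \sum_(w : msgs_over F K L) \sum_(z : Zt)
     (#|{: msgs_over F K L}|%:R)^-1 * pZ z * (E w z)%:R.

Definition PID_scheme_over (R : realType) (F : finFieldType) (K N M L : nat)
    (Zt : finType) (pZ : Zt -> R) (S : 'I_N -> {set 'I_K}) (D : 'I_N -> nat)
    (A : forall (k : 'I_K) (n : 'I_N), msgs_over F K L -> Zt -> 'rV[F]_(D n)) :=
  (forall n, #|S n| = M) /\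
  ((forall z, 0 <= pZ z) /\ \sum_(z : Zt) pZ z = 1) /\
  (forall k n (w w' : msgs_over F K L) z,
      (forall i, i \in S n -> w i = w' i) -> A k n w z = A k n w' z) /\
  (forall k (w w' : msgs_over F K L) z z', 0 < pZ z -> 0 < pZ z' ->
      (forall n, A k n w z = A k n w' z') -> w k = w' k) /\
  (forall (k k' : 'I_K) (a : forall n : 'I_N, 'rV[F]_(D n)) (x : 'rV[F]_L),
      prob_over pZ (fun w z => [forall n, A k n w z == a n] && (w k == x))
    = prob_over pZ (fun w z => [forall n, A k' n w z == a n] && (w k' == x))).

Lemma PID_scheme_Fp (R : realType) K N M L p (Zt : finType) (pZ : Zt -> R) S D
    (A : forall (k : 'I_K) (n : 'I_N), msgs K L p -> Zt -> 'rV['F_p]_(D n)) :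
  prime p -> @PID_scheme_over R 'F_p K N M L Zt pZ S D A ->
  @PID_scheme R K N M L p Zt pZ S D A.
Proof. by split. Qed.

Section LinearScheme.
Variables (R : realType) (F : finFieldType) (K N M l : nat).
Variables (store : 'I_N -> {set 'I_K}) (download : 'I_N -> nat).
Variable slot_vec : 'I_N * 'I_l.+1 -> 'rV[F]_l.
Variable basis_slot : 'I_K -> 'I_l -> 'I_N * 'I_l.+1.
Variable k0 : 'I_K.

Definition noise := {ffun 'I_N * 'I_l.+1 -> F}.

Definition unif_noise : noise -> R := fun=> (#|{: noise}|%:R)^-1.

Definition decode (a : noise) : 'rV[F]_l := \sum_i a i *: slot_vec i.

Definition basis_mx (k : 'I_K) : 'M[F]_l :=
  \matrix_(u, v) slot_vec (basis_slot k u) 0 v.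

Definition encode (k : 'I_K) (x : 'rV[F]_l) : noise :=
  [ffun i => \sum_(u < l) (i == basis_slot k u)%:R * (x *m invmx (basis_mx k)) 0 u].

(* [z - encode k0 (decode z)] lies in the kernel of [decode], for any fixed [k0]. *)
Definition answer_vec (k : 'I_K) (w : msgs_over F K l) (z : noise) : noise :=
  encode k (w k) + z - encode k0 (decode z).

Definition answer (k : 'I_K) (n : 'I_N) (w : msgs_over F K l) (z : noise) :
    'rV[F]_(download n) :=
  \row_(j < download n) answer_vec k w z (n, inord j).

Definition swap_msgs (k k' : 'I_K) (w : msgs_over F K l) : msgs_over F K l :=
  [ffun i => w (tperm k k' i)].

Lemma decodeD a b : decode (a + b) = decode a + decode b.
Proof. by rewrite /decode -big_split; apply: eq_bigr => i _; rewrite ffunE scalerDl. Qed.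

Lemma decodeB a b : decode (a - b) = decode a - decode b.
Proof. by rewrite /decode -sumrB; apply: eq_bigr => i _; rewrite !ffunE scalerBl. Qed.

Lemma answer_vecE k (w : msgs_over F K l) z i :
  answer_vec k w z i = encode k (w k) i + z i - encode k0 (decode z) i.
Proof. by rewrite !ffunE. Qed.

Lemma swap_msgsK k k' : involutive (swap_msgs k k').
Proof. by move=> w; apply/ffunP => i; rewrite !ffunE tpermK. Qed.

Lemma swap_msgsR k k' w : swap_msgs k k' w k' = w k.
Proof. by rewrite ffunE tpermR. Qed.

Lemma unif_noise_pmf : (forall z, 0 <= unif_noise z) /\ \sum_z unif_noise z = 1.
Proof.
split=> [z|]; first by rewrite invr_ge0 ler0n.
have noise_gt0 : (0 < #|{: noise}|)%N by apply/card_gt0P; exists 0.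
by rewrite sumr_const -[_ *+ _]mulr_natl mulfV // pnatr_eq0 -lt0n.
Qed.

Hypothesis basis_mx_unit : forall k, basis_mx k \in unitmx.
Hypothesis basis_slot_stored : forall k u, k \in store (basis_slot k u).1.
Hypothesis slot_vec_sent : forall i, slot_vec i != 0 -> (i.2 < download i.1)%N.

Lemma decode_encode k x : decode (encode k x) = x.
Proof.
set c := x *m invmx (basis_mx k).
have -> : decode (encode k x) = \sum_(u < l) c 0 u *: slot_vec (basis_slot k u).
  rewrite /decode (eq_bigr (fun i =>
      \sum_(u < l) ((i == basis_slot k u)%:R * c 0 u) *: slot_vec i)); last first.
    by move=> i _; rewrite ffunE scaler_suml.
  rewrite exchange_big /=; apply: eq_bigr => u _.
  rewrite (bigD1 (basis_slot k u)) //= eqxx mul1r big1 ?addr0 // => i /negbTE ->.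
  by rewrite mul0r scale0r.
have -> : \sum_(u < l) c 0 u *: slot_vec (basis_slot k u) = c *m basis_mx k.
  rewrite mulmx_sum_row; apply: eq_bigr => u _; congr (_ *: _).
  by apply/rowP => v; rewrite !mxE.
by rewrite mulmxKV.
Qed.

Lemma encode_unstored k x n j : k \notin store n -> encode k x (n, j) = 0.
Proof.
move=> kS; rewrite ffunE big1 // => u _.
case: eqP => [slot_pos|]; last by rewrite mul0r.
by move: kS; rewrite -[n]/((n, j).1) slot_pos basis_slot_stored.
Qed.

Lemma decode_answer_vec k (w : msgs_over F K l) z : decode (answer_vec k w z) = w k.
Proof. by rewrite decodeB decodeD !decode_encode addrK. Qed.

Lemma answer_vec_swap k k' (w : msgs_over F K l) z :
  answer_vec k' (swap_msgs k k' w) (z + (encode k (w k) - encode k' (w k)))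
  = answer_vec k w z.
Proof.
rewrite /answer_vec decodeD decodeB !decode_encode subrr addr0 swap_msgsR.
by rewrite addrCA [encode k' _ + _]addrC subrK addrC.
Qed.

Lemma answer_stored k n (w w' : msgs_over F K l) z :
  (forall i, i \in store n -> w i = w' i) -> answer k n w z = answer k n w' z.
Proof.
move=> ww'; apply/rowP => j; rewrite !mxE !answer_vecE.
have [kS|kS] := boolP (k \in store n); first by rewrite ww'.
by rewrite !(encode_unstored _ _ kS).
Qed.

Lemma answer_correct k (w w' : msgs_over F K l) z z' :
  (forall n, answer k n w z = answer k n w' z') -> w k = w' k.
Proof.
move=> ww'; rewrite -(decode_answer_vec k w z) -(decode_answer_vec k w' z').
apply: eq_bigr => -[n j] _.
have [->|/slot_vec_sent /= j_sent] := eqVneq (slot_vec (n, j)) 0.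
  by rewrite !scaler0.
have := congr1 (fun r : 'rV_(download n) => r 0 (Ordinal j_sent)) (ww' n); rewrite !mxE.
by rewrite (_ : inord _ = j) => [-> //|]; apply: val_inj; rewrite /= inordK.
Qed.

Lemma answer_private k k' a x :
    prob_over unif_noise (fun w z => [forall n, answer k n w z == a n] && (w k == x))
  = prob_over unif_noise (fun w z => [forall n, answer k' n w z == a n] && (w k' == x)).
Proof.
pose shift (w : msgs_over F K l) := encode k (w k) - encode k' (w k).
have event_swap w z :
    [forall n, answer k' n (swap_msgs k k' w) (z + shift w) == a n]
      && (swap_msgs k k' w k' == x)
  = [forall n, answer k n w z == a n] && (w k == x).
  have answer_swap n : answer k' n (swap_msgs k k' w) (z + shift w) = answer k n w z.
    by rewrite /answer answer_vec_swap.
  by rewrite swap_msgsR; under eq_forallb => n do rewrite answer_swap.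
rewrite /prob_over [RHS](reindex_inj (can_inj (swap_msgsK k k'))).
apply: eq_bigr => w _; rewrite [RHS](reindex_inj (addIr (shift w))).
by apply: eq_bigr => z _; rewrite -event_swap.
Qed.

Lemma linear_PID_scheme :
  (forall n, #|store n| = M) ->
  @PID_scheme_over R F K N M l noise unif_noise store download answer.
Proof.
move=> card_S; split=> //; split; first exact: unif_noise_pmf.
split; first exact: answer_stored.
split; first by move=> *; apply: answer_correct.
exact: answer_private.
Qed.

End LinearScheme.

Definition block_servers (K M : nat) : nat := (K %/ M).-1.
Definition cyclic_msgs (K M : nat) : nat := (K - block_servers K M * M)%N.
Definition msg_len (K N M : nat) : nat :=
  ((N - block_servers K M) * M %/ cyclic_msgs K M)%N.

Section BlockCyclicDesign.
Variables (F : finFieldType) (K N M : nat).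
Local Notation Q := (block_servers K M).
Local Notation K' := (cyclic_msgs K M).
Local Notation l := (msg_len K N M).
Hypotheses (M_gt0 : (0 < M)%N) (M_le_K : (M <= K)%N).

Lemma block_servers_bound : (Q * M + M <= K)%N.
Proof.
have -> : (Q * M + M = (K %/ M) * M)%N by rewrite -mulSnr prednK // divn_gt0.
exact: leq_divM.
Qed.

Lemma M_le_cyclic_msgs : (M <= K')%N.
Proof. by have := block_servers_bound; rewrite /cyclic_msgs; lia. Qed.

Definition stored_msg (n t : nat) : nat :=
  if (n < Q)%N then (n * M + t)%N else (Q * M + ((n - Q) * M + t) %% K')%N.

Lemma stored_msg_lt n (t : 'I_M) : (stored_msg n t < K)%N.
Proof.
have := block_servers_bound; have := ltn_ord t; rewrite /stored_msg.
case: ifP => [n_lt_Q|_].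
  have : (n * M + M <= Q * M)%N by rewrite -mulSnr leq_mul2r n_lt_Q orbT.
  lia.
have : (((n - Q) * M + t) %% K' < K')%N.
  by rewrite ltn_mod; have := M_le_cyclic_msgs; lia.
rewrite /cyclic_msgs; lia.
Qed.

Lemma stored_msg_inj n (t t' : 'I_M) : stored_msg n t = stored_msg n t' -> t = t'.
Proof.
move=> e; apply: val_inj; move: e; rewrite /stored_msg.
case: ifP => _; first exact: addnI.
move/addnI/eqP; rewrite eqn_modDl => /eqP.
have := M_le_cyclic_msgs; have := ltn_ord t; have := ltn_ord t' => ? ? ?.
by rewrite !modn_small //; lia.
Qed.

Definition store (n : 'I_N) : {set 'I_K} :=
  [set Ordinal (stored_msg_lt n t) | t : 'I_M].

Lemma card_store n : #|store n| = M.
Proof.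
rewrite card_imset ?card_ord // => t t' /(congr1 val) /=.
exact: stored_msg_inj.
Qed.

Lemma mem_store (n : 'I_N) (k : 'I_K) (t : 'I_M) :
  stored_msg n t = k -> k \in store n.
Proof. by move=> e; apply/imsetP; exists t => //; apply: val_inj. Qed.

Hypothesis Q_lt_N : (Q < N)%N.

Definition download (n : 'I_N) : nat := if (n < Q)%N then l else 1%N.

Lemma sum_download : (\sum_n download n = Q * l + (N - Q))%N.
Proof. by rewrite sum_ord_ltn_if ?muln1 // ltnW. Qed.

Definition slot_vec (i : 'I_N * 'I_l.+1) : 'rV[F]_l :=
  if (i.1 < Q)%N then \row_v ((v : nat) == i.2)%:R
  else if i.2 == 0 :> nat then \row_v ((i.1 - Q)%N%:R ^+ v) else 0.

Lemma slot_vec_sent i : slot_vec i != 0 -> (i.2 < download i.1)%N.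
Proof.
rewrite /slot_vec /download; case: ifP => _; last first.
  by case: ifP => [/eqP -> | _]; rewrite ?eqxx.
apply: contraNT; rewrite -leqNgt => l_le_i2.
apply/eqP/rowP => v; rewrite !mxE.
by have /negbTE -> : (v : nat) != i.2 by have := ltn_ord v; lia.
Qed.

Definition cyclic_pos (k u : nat) : nat := (k - Q * M + u * K')%N.

Lemma cyclic_server_lt (k : 'I_K) (u : 'I_l) :
  (Q * M <= k)%N -> (cyclic_pos k u %/ M < N - Q)%N.
Proof.
move=> QM_le_k; rewrite ltn_divLR //.
have : (u * K' + K' <= l * K')%N by rewrite -mulSnr leq_mul2r ltn_ord orbT.
have : (l * K' <= (N - Q) * M)%N by apply: leq_divM.
have := ltn_ord k; rewrite /cyclic_pos /cyclic_msgs; lia.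
Qed.

Lemma cyclic_server_increasing (k : nat) (i j : 'I_l) :
  (i < j)%N -> (cyclic_pos k i %/ M < cyclic_pos k j %/ M)%N.
Proof.
move=> i_lt_j.
suff : ((cyclic_pos k i + M) %/ M <= cyclic_pos k j %/ M)%N.
  by rewrite divnDr ?dvdnn // divnn M_gt0 addn1.
have : (i * K' + K' <= j * K')%N by rewrite -mulSnr leq_mul2r i_lt_j orbT.
have := M_le_cyclic_msgs => ? ?.
by apply: leq_div2r; rewrite /cyclic_pos; lia.
Qed.

Definition basis_server (k u : nat) : nat :=
  if (k < Q * M)%N then (k %/ M)%N else (Q + cyclic_pos k u %/ M)%N.

Lemma basis_server_lt (k : 'I_K) (u : 'I_l) : (basis_server k u < N)%N.
Proof.
rewrite /basis_server; case: (ltnP k (Q * M)) => [k_lt_QM | QM_le_k].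
  have : (k %/ M < Q)%N by rewrite ltn_divLR.
  lia.
by have := cyclic_server_lt u QM_le_k; lia.
Qed.

Definition basis_slot (k : 'I_K) (u : 'I_l) : 'I_N * 'I_l.+1 :=
  (Ordinal (basis_server_lt k u), if (k < Q * M)%N then inord u else ord0).

Lemma basis_slot_stored k u : k \in store (basis_slot k u).1.
Proof.
have [k_lt_QM | QM_le_k] := ltnP k (Q * M).
  apply: (mem_store (t := Ordinal (ltn_pmod k M_gt0))) => /=.
  by rewrite /basis_server k_lt_QM /stored_msg ltn_divLR // k_lt_QM -divn_eq.
apply: (mem_store (t := Ordinal (ltn_pmod (cyclic_pos k u) M_gt0))) => /=.
rewrite /basis_server [(k < _)%N]ltnNge QM_le_k /stored_msg ltnNge leq_addr /=.
rewrite addKn -divn_eq.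
rewrite /cyclic_pos [(k - _ + _)%N]addnC modnMDl modn_small; first by lia.
by have := ltn_ord k; rewrite /cyclic_msgs; lia.
Qed.

Hypothesis natr_inj_lt : forall i j : nat,
  (i < N - Q)%N -> (j < N - Q)%N -> (i%:R : F) = j%:R -> i = j.

Lemma basis_mx_unit k : basis_mx slot_vec basis_slot k \in unitmx.
Proof.
have [k_lt_QM | QM_le_k] := ltnP k (Q * M).
  have -> : basis_mx slot_vec basis_slot k = 1%:M.
    apply/matrixP => u v; rewrite !mxE /slot_vec /basis_slot /basis_server /= k_lt_QM.
    rewrite ltn_divLR // k_lt_QM mxE inordK 1?eq_sym //.
    exact: ltnW (ltn_ord u).
  exact: unitmx1.
pose a : 'rV[F]_l := \row_u (cyclic_pos k u %/ M)%:R.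
have -> : basis_mx slot_vec basis_slot k = (Vandermonde l a)^T.
  apply/matrixP => u v; rewrite !mxE /slot_vec /basis_slot /basis_server /=.
  by rewrite [(k < _)%N]ltnNge QM_le_k /= ltnNge leq_addr /= addKn mxE.
rewrite unitmx_tr unitmxE det_Vandermonde unitfE.
apply/prodf_neq0 => i _; apply/prodf_neq0 => j i_lt_j; rewrite !mxE subr_eq0.
apply/eqP => /natr_inj_lt e.
have := cyclic_server_increasing k i_lt_j.
by rewrite e ?ltnn //; apply: cyclic_server_lt.
Qed.

End BlockCyclicDesign.

Lemma block_cyclic_achievable (R : realType) (K N M : nat) :
  let Q := block_servers K M in let l := msg_len K N M in
  (0 < M)%N -> (M <= K)%N -> (Q < N)%N ->
  achievable K N M (l%:R / (Q * l + (N - Q))%:R : R).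
Proof.
move=> Q l M_gt0 M_le_K Q_lt_N.
have [p N_lt_p p_prime] := prime_above N.
pose k0 : 'I_K := Ordinal (leq_trans M_gt0 M_le_K).
exists l, p, (noise 'F_p N l), (@unif_noise R 'F_p N l), (store M_gt0 M_le_K),
  (download K M),
  (answer (download K M) (slot_vec 'F_p (M:=M)) (basis_slot M_gt0 M_le_K Q_lt_N) k0).
split; last by rewrite sum_download.
have natr_inj i j : (i < N - Q)%N -> (j < N - Q)%N -> (i%:R : 'F_p) = j%:R -> i = j.
  by move=> i_lt j_lt; apply: natr_Fp_inj => //; lia.
apply: (PID_scheme_Fp p_prime); apply: linear_PID_scheme.
- exact: basis_mx_unit.
- exact: basis_slot_stored.
- exact: slot_vec_sent.
- exact: card_store.
Qed.

Unset Implicit Arguments.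

Theorem theorem3 (R : realType) (K N M : nat) :
  (1 <= M <= K)%N ->
  ~~ (M %| K)%N ->
  let KM : R := K%:R / M%:R in
  let g : R := (gcdn K M)%:R in
  let q : R := (Num.floor KM)%:~R in
  ((Num.ceil KM)%:~R : R) < N%:R ->
  N%:R < K%:R / g - (M%:R / g - 1) * (q - 1) ->
  let l : R := (Num.floor ((N%:R - q + 1) * M%:R / (K%:R - (q - 1) * M%:R)))%:~R in
  ((l / (N%:R + (l - 1) * (q - 1)))%:E <= capacity R K N M)%E.
Proof.
(* Only [floor(K/M) - 1 < N] is needed: the scheme works without the other bounds. *)
move=> /andP[M_gt0 M_le_K] _ KM g q ceil_lt_N _; cbv zeta.
set l := ((Num.floor _)%:~R : R).
set Q := block_servers K M.
have q_eq : q = Q%:R + 1.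
  by rewrite /q /KM floor_natr_div // natr1 /Q /block_servers prednK ?divn_gt0.
have Q_lt_N : (Q < N)%N.
  have : q < N%:R.
    exact: le_lt_trans (floor_le KM) (le_lt_trans (ceil_ge KM) ceil_lt_N).
  by rewrite q_eq natr1 ltr_nat => /ltnW.
have QM_lt_K : (Q * M < K)%N by have := block_servers_bound M_gt0 M_le_K; lia.
have l_eq : l = (msg_len K N M)%:R.
  rewrite /l (_ : _ / _ = ((N - Q) * M)%N%:R / (K - Q * M)%N%:R).
    by rewrite floor_natr_div ?subn_gt0.
  rewrite q_eq natrM !natrB ?natrM 1?ltnW //.
  by congr (_ * _ / (_ - _)); ring.
apply: ereal_sup_ubound; exists (l / (N%:R + (l - 1) * (q - 1))) => //.
suff -> : N%:R + (l - 1) * (q - 1) = (Q * msg_len K N M + (N - Q))%:R.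
  by rewrite l_eq; apply: block_cyclic_achievable.
by rewrite l_eq q_eq addrK natrD natrM natrB 1?ltnW //; ring.
Qed.
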